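(* Let $G$ be a dicotic nonzugzwang scoring game all of whose terminal positions are numbers. Then $m(G)-\sigma(G)\leq Rs(G)\leq m(G)\leq Ls(G)\leq m(G)+\sigma(G)$.
   Context: A scoring game is $G=\langle G^L\mid G^R\rangle$ with $G^L,G^R$ finite nonempty sets of scoring games or empty sets decorated with a real, $\emptyset^s$; $\langle\emptyset^s\mid\emptyset^s\rangle$ is the number $s$. $Ls(\langle\emptyset^s\mid G^R\rangle)=s$, $Rs(\langle G^L\mid\emptyset^s\rangle)=s$, otherwise $Ls(G)=\max_{G^l\in G^L}Rs(G^l)$, $Rs(G)=\min_{G^r\in G^R}Ls(G^r)$. Disjunctive sum: Left options of $G_1+G_2$ are all $G_1^l+G_2$, $G_1+G_2^l$ (Left side $\emptyset^{\ell_1+\ell_2}$ if neither has Left options), symmetrically for Right; $H+c$ adds the number $c$ to all terminal scores; $nG$ is the sum of $n$ copies. Dicotic: at every position both players have options or neither; nonzugzwang: $Ls(H)\ge Rs(H)$ at every position. Mean: $m(G)=\lim_{n\to\infty}Ls(nG)/n=\lim_{n\to\infty}Rs(nG)/n$ (these exist and agree for dicotic nonzugzwang games). Cooling: if $G$ is a number $k$, $G_t=k$, $\sigma(G)=0$; otherwise $\widetilde G_t=\langle \{G^l_t-t\}\mid \{G^r_t+t\}\rangle$, $t_0=\min\{t\ge0: Ls(\widetilde G_t)=Rs(\widetilde G_t)\}$, $G_t=\widetilde G_t$ for $t\le t_0$ and the number $Ls(\widetilde G_{t_0})$ for $t>t_0$; $\sigma(G)=t_0$ is the temperature. *)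

From Stdlib Require Import Reals List Relations.
From Coquelicot Require Import Coquelicot.
Import ListNotations.
Open Scope R_scope.

(* The real [l] (resp. [r]) is the decoration of
   the empty Left (resp. Right) set, i.e. the game is <emptyset^l | ...> when
   L = [] ; it is ignored (by every function below) when L <> []. *)
Inductive game : Type :=
  Gm : list game -> R -> list game -> R -> game.

Definition leftopts (g : game) : list game := let 'Gm L _ _ _ := g in L.
Definition rightopts (g : game) : list game := let 'Gm _ _ Rt _ := g in Rt.
Definition leftscore (g : game) : R := let 'Gm _ l _ _ := g in l.
Definition rightscore (g : game) : R := let 'Gm _ _ _ r := g in r.

Definition num (s : R) : game := Gm [] s [] s.

Fixpoint LRs (g : game) : R * R :=
  match g with
  | Gm L l Rt r =>
    (match L with
     | [] => l
     | x :: xs => fold_right (fun y acc => Rmax (snd (LRs y)) acc) (snd (LRs x)) xs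
     end,
     match Rt with
     | [] => r
     | x :: xs => fold_right (fun y acc => Rmin (fst (LRs y)) acc) (fst (LRs x)) xs
     end)
  end.

Definition Ls (g : game) : R := fst (LRs g).
Definition Rs (g : game) : R := snd (LRs g).

Fixpoint gplus (g : game) : game -> game :=
  match g with
  | Gm gL gl gR gr =>
    fix gplus_g (h : game) : game :=
      match h with
      | Gm hL hl hR hr =>
        Gm (map (fun x => gplus x h) gL ++ map gplus_g hL) (gl + hl)
           (map (fun x => gplus x h) gR ++ map gplus_g hR) (gr + hr)
      end
  end.

Fixpoint gtimes (n : nat) (g : game) : game :=
  match n with
  | O => num 0
  | S k => gplus g (gtimes k g)
  end.

Definition is_option (p g : game) : Prop := In p (leftopts g) \/ In p (rightopts g).
Definition position : game -> game -> Prop := clos_refl_trans game is_option.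

Definition dicotic (g : game) : Prop :=
  forall p, position p g -> (leftopts p = [] <-> rightopts p = []).

Definition nonzugzwang (g : game) : Prop :=
  forall p, position p g -> Ls p >= Rs p.

Definition terminals_are_numbers (g : game) : Prop :=
  forall p, position p g -> leftopts p = [] -> rightopts p = [] ->
    leftscore p = rightscore p.

Definition mean (g : game) : R :=
  real (Lim_seq (fun n => Ls (gtimes n g) / INR n)).

(* t0 for a family of games t |-> G~_t : min { t >= 0 | Ls = Rs }
   (taken as an infimum). *)
Definition t0_of (tg : R -> game) : R :=
  real (Glb_Rbar (fun t => 0 <= t /\ Ls (tg t) = Rs (tg t))).

Definition is_numberb (g : game) : bool :=
  match g with
  | Gm [] l [] r => if Req_EM_T l r then true else false
  | _ => false
  end.

Fixpoint cool (g : game) : R -> game :=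
  match g with
  | Gm L l Rt r =>
    let tilde := fun t =>
      Gm (map (fun x => gplus (cool x t) (num (- t))) L) l
         (map (fun x => gplus (cool x t) (num t)) Rt) r in
    if is_numberb g then fun _ => g
    else let t0 := t0_of tilde in
         fun t => if Rle_dec t t0 then tilde t else num (Ls (tilde t0))
  end.

Definition tilde (g : game) (t : R) : game :=
  match g with
  | Gm L l Rt r =>
      Gm (map (fun x => gplus (cool x t) (num (- t))) L) l
         (map (fun x => gplus (cool x t) (num t)) Rt) r
  end.

Definition temperature (g : game) : R :=
  if is_numberb g then 0 else t0_of (tilde g).

(* Write [mast G] for the number that the cooled game G_t becomes once t exceeds
   the temperature of G.  For finitely many games G_i and t >= 0, compare the sum of
   the G_i with the sum of the cooled games (G_i)_t: Left's stop drops by at most t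
   and Right's stop rises by at most t,
     Ls (sum (G_i)_t) <= Ls (sum G_i) <= Ls (sum (G_i)_t) + t,
     Rs (sum (G_i)_t) - t <= Rs (sum G_i) <= Rs (sum (G_i)_t).
   This is proved by induction on the options of the sum, using Milnor's inequalities
   for sums of dicotic nonzugzwang games.  The heart of the argument is the case where
   every cooled component is already frozen: the player then moves in the hottest
   component at its own temperature, where all other components have frozen at their
   mast values.  For n copies of G and t just above the temperature this gives
   n mast(G) <= Ls(nG) <= n mast(G) + t, so m(G) = mast(G); for G alone, letting t
   decrease to the temperature gives the four inequalities. *)

From Stdlib Require Import Reals List Relations Lra Lia Classical.
From Coquelicot Require Import Rcomplements Rbar Lub Lim_seq.
(* [Defs] comes last: the field tactics also export a constant [num]. *)
From Pilot Require Import Defs.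
Import ListNotations.
Open Scope R_scope.

Definition game_ind_opts (P : game -> Prop)
  (IH : forall L l R r, (forall x, In x L -> P x) -> (forall x, In x R -> P x) -> P (Gm L l R r)) :
  forall g, P g :=
  fix F g :=
    let fix all (xs : list game) : forall x, In x xs -> P x :=
      match xs with
      | [] => fun x Hx => False_ind _ Hx
      | y :: ys => fun x Hx =>
          match Hx with
          | or_introl E => eq_ind y P (F y) x E
          | or_intror Hx' => all ys x Hx'
          end
      end in
    match g with Gm L l R r => IH L l R r (all L) (all R) end.

Lemma game_pair_ind (P : game -> game -> Prop) :
  (forall G H, (forall g, is_option g G -> P g H) -> (forall h, is_option h H -> P G h) -> P G H) ->
  forall G H, P G H.
Proof.
  intros IH G. induction G as [L l R r IHL IHR] using game_ind_opts.
  intros H. induction H as [L' l' R' r' IHL' IHR'] using game_ind_opts.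
  apply IH.
  - intros g [Hg|Hg]; [apply IHL|apply IHR]; exact Hg.
  - intros h [Hh|Hh]; [apply IHL'|apply IHR']; exact Hh.
Qed.

(** * Stops and disjunctive sums *)

Lemma fold_Rmax_spec {A} (f : A -> R) a xs :
  (forall y, In y (a :: xs) -> f y <= fold_right (fun y m => Rmax (f y) m) (f a) xs) /\
  exists y, In y (a :: xs) /\ fold_right (fun y m => Rmax (f y) m) (f a) xs = f y.
Proof.
  induction xs as [|b xs [IHle [y [Hy E]]]]; cbn [fold_right].
  - split; [intros y [<-|[]]; lra|]. exists a; split; [left|]; auto.
  - rewrite E. split.
    + intros z [<-|[<-|Hz]]; rewrite <- E.
      * eapply Rle_trans; [apply IHle; left; reflexivity|apply Rmax_r].
      * apply Rmax_l.
      * eapply Rle_trans; [apply IHle; right; exact Hz|apply Rmax_r].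
    + destruct (Rle_dec (f b) (f y)).
      * exists y. rewrite Rmax_right by lra. destruct Hy; simpl; auto.
      * exists b. rewrite Rmax_left by lra. simpl; auto.
Qed.

Lemma fold_Rmin_spec {A} (f : A -> R) a xs :
  (forall y, In y (a :: xs) -> fold_right (fun y m => Rmin (f y) m) (f a) xs <= f y) /\
  exists y, In y (a :: xs) /\ fold_right (fun y m => Rmin (f y) m) (f a) xs = f y.
Proof.
  induction xs as [|b xs [IHle [y [Hy E]]]]; cbn [fold_right].
  - split; [intros y [<-|[]]; lra|]. exists a; split; [left|]; auto.
  - rewrite E. split.
    + intros z [<-|[<-|Hz]]; rewrite <- E.
      * eapply Rle_trans; [apply Rmin_r|apply IHle; left; reflexivity].
      * apply Rmin_l.
      * eapply Rle_trans; [apply Rmin_r|apply IHle; right; exact Hz].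
    + destruct (Rle_dec (f b) (f y)).
      * exists b. rewrite Rmin_left by lra. simpl; auto.
      * exists y. rewrite Rmin_right by lra. destruct Hy; simpl; auto.
Qed.

Lemma Ls_ge_left g x : In x (leftopts g) -> Rs x <= Ls g.
Proof. destruct g as [[|a L] l R r]; [intros []|]. apply (fold_Rmax_spec Rs a L). Qed.

Lemma Rs_le_right g x : In x (rightopts g) -> Rs g <= Ls x.
Proof. destruct g as [L l [|a R] r]; [intros []|]. apply (fold_Rmin_spec Ls a R). Qed.

Lemma Ls_spec g :
  (leftopts g = [] /\ Ls g = leftscore g) \/ exists x, In x (leftopts g) /\ Ls g = Rs x.
Proof.
  destruct g as [[|a L] l R r]; [left; auto|right].
  apply (fold_Rmax_spec Rs a L).
Qed.

Lemma Rs_spec g :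
  (rightopts g = [] /\ Rs g = rightscore g) \/ exists x, In x (rightopts g) /\ Rs g = Ls x.
Proof.
  destruct g as [L l [|a R] r]; [left; auto|right].
  apply (fold_Rmin_spec Ls a R).
Qed.

Lemma Ls_le_intro g v :
  (leftopts g = [] -> leftscore g <= v) -> (forall x, In x (leftopts g) -> Rs x <= v) ->
  Ls g <= v.
Proof. intros Hnil Hopt. destruct (Ls_spec g) as [[E ->]|[x [Hx ->]]]; auto. Qed.

Lemma Rs_ge_intro g v :
  (rightopts g = [] -> v <= rightscore g) -> (forall x, In x (rightopts g) -> v <= Ls x) ->
  v <= Rs g.
Proof. intros Hnil Hopt. destruct (Rs_spec g) as [[E ->]|[x [Hx ->]]]; auto. Qed.

Lemma Ls_nil g : leftopts g = [] -> Ls g = leftscore g.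
Proof. destruct g as [L l R r]; simpl; intros ->; reflexivity. Qed.

Lemma Rs_nil g : rightopts g = [] -> Rs g = rightscore g.
Proof. destruct g as [L l R r]; simpl; intros ->; reflexivity. Qed.

Lemma Ls_num c : Ls (num c) = c.
Proof. reflexivity. Qed.

Lemma Rs_num c : Rs (num c) = c.
Proof. reflexivity. Qed.

Lemma leftopts_gplus G H :
  leftopts (gplus G H) = map (fun x => gplus x H) (leftopts G) ++ map (gplus G) (leftopts H).
Proof. destruct G, H; reflexivity. Qed.

Lemma rightopts_gplus G H :
  rightopts (gplus G H) = map (fun x => gplus x H) (rightopts G) ++ map (gplus G) (rightopts H).
Proof. destruct G, H; reflexivity. Qed.

Lemma in_left_gplus x G H : In x (leftopts (gplus G H)) <->
  (exists g, In g (leftopts G) /\ x = gplus g H) \/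
  (exists h, In h (leftopts H) /\ x = gplus G h).
Proof.
  rewrite leftopts_gplus, in_app_iff, !in_map_iff.
  split; intros [[y [E I]]|[y [E I]]]; [left|right|left|right]; exists y; auto.
Qed.

Lemma in_right_gplus x G H : In x (rightopts (gplus G H)) <->
  (exists g, In g (rightopts G) /\ x = gplus g H) \/
  (exists h, In h (rightopts H) /\ x = gplus G h).
Proof.
  rewrite rightopts_gplus, in_app_iff, !in_map_iff.
  split; intros [[y [E I]]|[y [E I]]]; [left|right|left|right]; exists y; auto.
Qed.

Lemma in_left_gplusl g G H : In g (leftopts G) -> In (gplus g H) (leftopts (gplus G H)).
Proof. intros Hg. apply in_left_gplus. left; eauto. Qed.
Lemma in_left_gplusr h G H : In h (leftopts H) -> In (gplus G h) (leftopts (gplus G H)).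
Proof. intros Hh. apply in_left_gplus. right; eauto. Qed.
Lemma in_right_gplusl g G H : In g (rightopts G) -> In (gplus g H) (rightopts (gplus G H)).
Proof. intros Hg. apply in_right_gplus. left; eauto. Qed.
Lemma in_right_gplusr h G H : In h (rightopts H) -> In (gplus G h) (rightopts (gplus G H)).
Proof. intros Hh. apply in_right_gplus. right; eauto. Qed.

Lemma left_gplus_nil G H : leftopts (gplus G H) = [] <-> leftopts G = [] /\ leftopts H = [].
Proof.
  rewrite leftopts_gplus. split.
  - intros [E1 E2]%app_eq_nil. apply map_eq_nil in E1, E2. auto.
  - intros [-> ->]. reflexivity.
Qed.

Lemma right_gplus_nil G H : rightopts (gplus G H) = [] <-> rightopts G = [] /\ rightopts H = [].
Proof.
  rewrite rightopts_gplus. split.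
  - intros [E1 E2]%app_eq_nil. apply map_eq_nil in E1, E2. auto.
  - intros [-> ->]. reflexivity.
Qed.

Lemma leftscore_gplus G H : leftscore (gplus G H) = leftscore G + leftscore H.
Proof. destruct G, H; reflexivity. Qed.

Lemma rightscore_gplus G H : rightscore (gplus G H) = rightscore G + rightscore H.
Proof. destruct G, H; reflexivity. Qed.

(** * Games equal up to the order of options *)

Definition egli_milner {A B} (P : A -> B -> Prop) (L : list A) (L' : list B) : Prop :=
  (forall x, In x L -> exists y, In y L' /\ P x y) /\
  (forall y, In y L' -> exists x, In x L /\ P x y).

Lemma egli_milner_nil {A B} (P : A -> B -> Prop) L L' : egli_milner P L L' -> L = [] <-> L' = [].
Proof.
  intros [Hfw Hbw]; split; intros E.
  - destruct L' as [|y L']; [reflexivity|].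
    destruct (Hbw y (or_introl eq_refl)) as [x [Hx _]]. rewrite E in Hx. destruct Hx.
  - destruct L as [|x L]; [reflexivity|].
    destruct (Hfw x (or_introl eq_refl)) as [y [Hy _]]. rewrite E in Hy. destruct Hy.
Qed.

Lemma egli_milner_sym {A B} (P : A -> B -> Prop) L L' :
  egli_milner P L L' -> egli_milner (fun y x => P x y) L' L.
Proof. intros [Hfw Hbw]. split; assumption. Qed.

Lemma egli_milner_trans {A B C} (P : A -> B -> Prop) (Q : B -> C -> Prop) (S : A -> C -> Prop)
  L M N :
  (forall x y z, In x L -> P x y -> Q y z -> S x z) ->
  egli_milner P L M -> egli_milner Q M N -> egli_milner S L N.
Proof.
  intros HS [F1 B1] [F2 B2]. split.
  - intros x Hx. destruct (F1 x Hx) as [y [Hy Pxy]]. destruct (F2 y Hy) as [z [Hz Qyz]]. eauto.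
  - intros z Hz. destruct (B2 z Hz) as [y [Hy Qyz]]. destruct (B1 y Hy) as [x [Hx Pxy]]. eauto.
Qed.

Lemma egli_milner_impl {A B} (P Q : A -> B -> Prop) L L' :
  (forall x y, In x L -> In y L' -> P x y -> Q x y) -> egli_milner P L L' -> egli_milner Q L L'.
Proof.
  intros HQ [Hfw Hbw]. split.
  - intros x Hx. destruct (Hfw x Hx) as [y [Hy Pxy]]. eauto.
  - intros y Hy. destruct (Hbw y Hy) as [x [Hx Pxy]]. eauto.
Qed.

Lemma egli_milner_app {A B} (P : A -> B -> Prop) L1 L2 M1 M2 :
  egli_milner P L1 M1 -> egli_milner P L2 M2 -> egli_milner P (L1 ++ L2) (M1 ++ M2).
Proof.
  intros [FA BA] [FB BB]. split.
  - intros x [Hx|Hx]%in_app_iff;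
      [destruct (FA x Hx) as [y [Hy Pxy]]|destruct (FB x Hx) as [y [Hy Pxy]]];
      exists y; rewrite in_app_iff; auto.
  - intros y [Hy|Hy]%in_app_iff;
      [destruct (BA y Hy) as [x [Hx Pxy]]|destruct (BB y Hy) as [x [Hx Pxy]]];
      exists x; rewrite in_app_iff; auto.
Qed.

Lemma egli_milner_app_comm {A B} (P : A -> B -> Prop) L M1 M2 :
  egli_milner P L (M1 ++ M2) -> egli_milner P L (M2 ++ M1).
Proof.
  intros [Hfw Hbw]. split.
  - intros x Hx. destruct (Hfw x Hx) as [y [Hy Pxy]]. exists y. rewrite in_app_iff in *. tauto.
  - intros y Hy. apply Hbw. rewrite in_app_iff in *. tauto.
Qed.

Lemma egli_milner_map {A B C D} (P : A -> B -> Prop) (Q : C -> D -> Prop)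
  (f : A -> C) (g : B -> D) L L' :
  (forall x y, In x L -> P x y -> Q (f x) (g y)) ->
  egli_milner P L L' -> egli_milner Q (map f L) (map g L').
Proof.
  intros HQ [Hfw Hbw]. split.
  - intros x' [x [<- Hx]]%in_map_iff. destruct (Hfw x Hx) as [y [Hy Pxy]].
    exists (g y). split; [apply in_map|]; auto.
  - intros y' [y [<- Hy]]%in_map_iff. destruct (Hbw y Hy) as [x [Hx Pxy]].
    exists (f x). split; [apply in_map|]; auto.
Qed.

Lemma egli_milner_maps {A B C} (P : B -> C -> Prop) (f : A -> B) (g : A -> C) L :
  (forall x, In x L -> P (f x) (g x)) -> egli_milner P (map f L) (map g L).
Proof.
  intros HP. split.
  - intros x' [x [<- Hx]]%in_map_iff. exists (g x). split; [apply in_map|]; auto.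
  - intros y' [x [<- Hx]]%in_map_iff. exists (f x). split; [apply in_map|]; auto.
Qed.

Lemma egli_milner_map_r {A B} (P : A -> B -> Prop) (f : A -> B) L :
  (forall x, In x L -> P x (f x)) -> egli_milner P L (map f L).
Proof.
  intros HP. split.
  - intros x Hx. exists (f x). split; [apply in_map|]; auto.
  - intros y [x [<- Hx]]%in_map_iff. eauto.
Qed.

Lemma Ls_shift_of_match c G H :
  egli_milner (fun x y => Rs y = Rs x + c) (leftopts G) (leftopts H) ->
  (leftopts G = [] -> leftscore H = leftscore G + c) -> Ls H = Ls G + c.
Proof.
  intros M Hterm. destruct (Ls_spec G) as [[E ->]|[x [Hx EG]]].
  - rewrite Ls_nil by (apply (egli_milner_nil _ _ _ M); exact E). auto.
  - destruct M as [Hfw Hbw]. destruct (Ls_spec H) as [[E _]|[y [Hy EH]]].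
    + destruct (Hfw x Hx) as [y [Hy _]]. rewrite E in Hy. destruct Hy.
    + apply Rle_antisym.
      * destruct (Hbw y Hy) as [x' [Hx' E]]. pose proof (Ls_ge_left G x' Hx'). lra.
      * destruct (Hfw x Hx) as [y' [Hy' E]]. pose proof (Ls_ge_left H y' Hy'). lra.
Qed.

Lemma Rs_shift_of_match c G H :
  egli_milner (fun x y => Ls y = Ls x + c) (rightopts G) (rightopts H) ->
  (rightopts G = [] -> rightscore H = rightscore G + c) -> Rs H = Rs G + c.
Proof.
  intros M Hterm. destruct (Rs_spec G) as [[E ->]|[x [Hx EG]]].
  - rewrite Rs_nil by (apply (egli_milner_nil _ _ _ M); exact E). auto.
  - destruct M as [Hfw Hbw]. destruct (Rs_spec H) as [[E _]|[y [Hy EH]]].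
    + destruct (Hfw x Hx) as [y [Hy _]]. rewrite E in Hy. destruct Hy.
    + apply Rle_antisym.
      * destruct (Hfw x Hx) as [y' [Hy' E]]. pose proof (Rs_le_right H y' Hy'). lra.
      * destruct (Hbw y Hy) as [x' [Hx' E]]. pose proof (Rs_le_right G x' Hx'). lra.
Qed.

Lemma LRs_gplus_num X c : Ls (gplus X (num c)) = Ls X + c /\ Rs (gplus X (num c)) = Rs X + c.
Proof.
  induction X as [L l R r IHL IHR] using game_ind_opts.
  split; [apply Ls_shift_of_match|apply Rs_shift_of_match];
    rewrite ?leftopts_gplus, ?rightopts_gplus, ?leftscore_gplus, ?rightscore_gplus, ?app_nil_r;
    auto; apply egli_milner_map_r; intros x Hx; [apply IHL|apply IHR]; exact Hx.
Qed.

Inductive bisim : game -> game -> Prop :=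
  bisim_intro G H :
    egli_milner bisim (leftopts G) (leftopts H) ->
    egli_milner bisim (rightopts G) (rightopts H) ->
    (leftopts G = [] -> leftscore G = leftscore H) ->
    (rightopts G = [] -> rightscore G = rightscore H) -> bisim G H.

Lemma bisim_LRs G H : bisim G H -> Ls G = Ls H /\ Rs G = Rs H.
Proof.
  revert H. induction G as [L l R r IHL IHR] using game_ind_opts.
  intros H B. inversion_clear B as [? ? ML MR TL TR].
  enough (Ls H = Ls (Gm L l R r) + 0 /\ Rs H = Rs (Gm L l R r) + 0) by lra.
  split; [apply Ls_shift_of_match|apply Rs_shift_of_match].
  - apply (egli_milner_impl bisim); [|exact ML].
    intros x y Hx _ Bxy. destruct (IHL x Hx y Bxy). lra.
  - intros E. rewrite TL by exact E. ring.
  - apply (egli_milner_impl bisim); [|exact MR].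
    intros x y Hx _ Bxy. destruct (IHR x Hx y Bxy). lra.
  - intros E. rewrite TR by exact E. ring.
Qed.

Lemma bisim_Ls G H : bisim G H -> Ls G = Ls H.
Proof. intros B. apply (bisim_LRs G H B). Qed.

Lemma bisim_Rs G H : bisim G H -> Rs G = Rs H.
Proof. intros B. apply (bisim_LRs G H B). Qed.

Lemma bisim_refl G : bisim G G.
Proof.
  induction G as [L l R r IHL IHR] using game_ind_opts.
  constructor; auto; simpl; split; eauto.
Qed.

Lemma bisim_sym G H : bisim G H -> bisim H G.
Proof.
  revert H. induction G as [L l R r IHL IHR] using game_ind_opts.
  intros H B. inversion_clear B as [? ? ML MR TL TR].
  constructor.
  - apply (egli_milner_impl (fun y x => bisim x y)); [|exact (egli_milner_sym _ _ _ ML)].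
    intros y x _ Hx. apply IHL, Hx.
  - apply (egli_milner_impl (fun y x => bisim x y)); [|exact (egli_milner_sym _ _ _ MR)].
    intros y x _ Hx. apply IHR, Hx.
  - intros E. symmetry. apply TL, (egli_milner_nil _ _ _ ML), E.
  - intros E. symmetry. apply TR, (egli_milner_nil _ _ _ MR), E.
Qed.

Lemma bisim_trans G H K : bisim G H -> bisim H K -> bisim G K.
Proof.
  revert H K. induction G as [L l R r IHL IHR] using game_ind_opts.
  intros H K B1 B2.
  inversion_clear B1 as [? ? ML MR TL TR]. inversion_clear B2 as [? ? ML' MR' TL' TR'].
  constructor.
  - revert ML ML'. apply egli_milner_trans. intros x y z Hx. apply IHL, Hx.
  - revert MR MR'. apply egli_milner_trans. intros x y z Hx. apply IHR, Hx.
  - intros E. rewrite TL, TL'; [reflexivity|apply (egli_milner_nil _ _ _ ML)|]; exact E.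
  - intros E. rewrite TR, TR'; [reflexivity|apply (egli_milner_nil _ _ _ MR)|]; exact E.
Qed.

Lemma bisim_gplus G G' H H' : bisim G G' -> bisim H H' -> bisim (gplus G H) (gplus G' H').
Proof.
  revert G' H H'. induction G as [L l R r IHL IHR] using game_ind_opts.
  intros G' H. revert G'.
  induction H as [LH lH RH rH IHLH IHRH] using game_ind_opts.
  intros G' H' BG BH. pose proof BG as BG0. pose proof BH as BH0.
  inversion_clear BG as [? ? ML MR TL TR]. inversion_clear BH as [? ? MLH MRH TLH TRH].
  constructor; rewrite ?leftopts_gplus, ?rightopts_gplus, ?leftscore_gplus, ?rightscore_gplus.
  - apply egli_milner_app.
    + revert ML. apply egli_milner_map. intros x y Hx Bxy. apply IHL; auto.
    + revert MLH. apply egli_milner_map. intros x y Hx Bxy. apply IHLH; auto.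
  - apply egli_milner_app.
    + revert MR. apply egli_milner_map. intros x y Hx Bxy. apply IHR; auto.
    + revert MRH. apply egli_milner_map. intros x y Hx Bxy. apply IHRH; auto.
  - intros [E1 E2]%app_eq_nil. apply map_eq_nil in E1, E2. rewrite TL, TLH; auto.
  - intros [E1 E2]%app_eq_nil. apply map_eq_nil in E1, E2. rewrite TR, TRH; auto.
Qed.

Lemma bisim_gplus_comm G H : bisim (gplus G H) (gplus H G).
Proof.
  revert H. induction G as [L l R r IHL IHR] using game_ind_opts.
  intros H. induction H as [LH lH RH rH IHLH IHRH] using game_ind_opts.
  constructor; rewrite ?leftopts_gplus, ?rightopts_gplus, ?leftscore_gplus, ?rightscore_gplus.
  - apply egli_milner_app_comm, egli_milner_app; apply egli_milner_maps; auto.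
  - apply egli_milner_app_comm, egli_milner_app; apply egli_milner_maps; auto.
  - intros _. apply Rplus_comm.
  - intros _. apply Rplus_comm.
Qed.

Lemma bisim_gplus_assoc G H K : bisim (gplus (gplus G H) K) (gplus G (gplus H K)).
Proof.
  revert H K. induction G as [L l R r IHL IHR] using game_ind_opts.
  intros H. induction H as [LH lH RH rH IHLH IHRH] using game_ind_opts.
  intros K. induction K as [LK lK RK rK IHLK IHRK] using game_ind_opts.
  constructor; rewrite ?leftopts_gplus, ?rightopts_gplus, ?leftscore_gplus, ?rightscore_gplus,
    ?map_app, ?map_map, <- ?app_assoc.
  - repeat apply egli_milner_app; apply egli_milner_maps; auto.
  - repeat apply egli_milner_app; apply egli_milner_maps; auto.
  - intros _. ring.
  - intros _. ring.
Qed.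

Lemma Ls_gplus_num X c : Ls (gplus X (num c)) = Ls X + c.
Proof. apply LRs_gplus_num. Qed.

Lemma Rs_gplus_num X c : Rs (gplus X (num c)) = Rs X + c.
Proof. apply LRs_gplus_num. Qed.

Lemma Ls_num_gplus X c : Ls (gplus (num c) X) = Ls X + c.
Proof. rewrite (bisim_Ls _ _ (bisim_gplus_comm _ _)). apply Ls_gplus_num. Qed.

Lemma Rs_num_gplus X c : Rs (gplus (num c) X) = Rs X + c.
Proof. rewrite (bisim_Rs _ _ (bisim_gplus_comm _ _)). apply Rs_gplus_num. Qed.
(** * Sums of dicotic nonzugzwang games *)

Inductive dnz : game -> Prop :=
  dnz_intro g :
    (forall x, is_option x g -> dnz x) ->
    (leftopts g = [] <-> rightopts g = []) ->
    (leftopts g = [] -> leftscore g = rightscore g) ->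
    Rs g <= Ls g -> dnz g.

Lemma dnz_of_hyps G : dicotic G -> nonzugzwang G -> terminals_are_numbers G -> dnz G.
Proof.
  intros Hd Hn Ht.
  enough (Hpos : forall p, position p G -> dnz p) by (apply Hpos, rt_refl).
  intros p. induction p as [L l R r IHL IHR] using game_ind_opts. intros Hp.
  constructor.
  - intros x [Hx|Hx]; [apply IHL|apply IHR]; auto;
      eapply rt_trans; eauto; apply rt_step; [left|right]; exact Hx.
  - apply Hd, Hp.
  - intros E. apply Ht; [exact Hp|exact E|apply Hd; assumption].
  - apply Rge_le, Hn, Hp.
Qed.

Lemma dnz_left g x : dnz g -> In x (leftopts g) -> dnz x.
Proof. intros [? Hopt _ _ _] Hx. apply Hopt. left; exact Hx. Qed.

Lemma dnz_right g x : dnz g -> In x (rightopts g) -> dnz x.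
Proof. intros [? Hopt _ _ _] Hx. apply Hopt. right; exact Hx. Qed.

Lemma dnz_option g x : dnz g -> is_option x g -> dnz x.
Proof. intros Hg [Hx|Hx]; [exact (dnz_left g x Hg Hx)|exact (dnz_right g x Hg Hx)]. Qed.

Lemma dnz_dicotic g : dnz g -> leftopts g = [] <-> rightopts g = [].
Proof. intros [? _ Hd _ _]. exact Hd. Qed.

Lemma dnz_Rs_le_Ls g : dnz g -> Rs g <= Ls g.
Proof. intros [? _ _ _ Hnz]. exact Hnz. Qed.

Lemma dnz_num_of_left_nil g : dnz g -> leftopts g = [] -> g = num (Ls g).
Proof.
  intros [[L l R r] _ Hd Ht _] E. simpl in *. subst L.
  rewrite (proj1 Hd eq_refl), Ht by reflexivity. reflexivity.
Qed.

Lemma dnz_num_of_right_nil g : dnz g -> rightopts g = [] -> g = num (Ls g).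
Proof. intros Hg E. apply dnz_num_of_left_nil, dnz_dicotic, E; exact Hg. Qed.

Lemma dnz_num c : dnz (num c).
Proof. constructor; [intros x [[]|[]]|reflexivity|reflexivity|apply Rle_refl]. Qed.

Record sum_bounds (G H : game) : Prop := {
  Ls_gplus_le : Ls (gplus G H) <= Ls G + Ls H;
  Rs_gplus_le_LR : Rs (gplus G H) <= Ls G + Rs H;
  Rs_gplus_le_RL : Rs (gplus G H) <= Rs G + Ls H;
  Rs_gplus_ge : Rs G + Rs H <= Rs (gplus G H);
  Ls_gplus_ge_LR : Ls G + Rs H <= Ls (gplus G H);
  Ls_gplus_ge_RL : Rs G + Ls H <= Ls (gplus G H) }.

Lemma dnz_sum_bounds G H : dnz G -> dnz H -> sum_bounds G H.
Proof.
  revert G H. apply (game_pair_ind (fun G H => dnz G -> dnz H -> sum_bounds G H)).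
  intros G H IHG IHH HG HH.
  assert (IHg : forall g, is_option g G -> sum_bounds g H)
    by (intros g Hg; exact (IHG g Hg (dnz_option G g HG Hg) HH)).
  assert (IHh : forall h, is_option h H -> sum_bounds G h)
    by (intros h Hh; exact (IHH h Hh HG (dnz_option H h HH Hh))).
  pose proof (dnz_Rs_le_Ls G HG). pose proof (dnz_Rs_le_Ls H HH).
  constructor.
  - apply Ls_le_intro.
    + intros [E1 E2]%left_gplus_nil. rewrite leftscore_gplus, (Ls_nil G E1), (Ls_nil H E2). lra.
    + intros x [[g [Hg ->]]|[h [Hh ->]]]%in_left_gplus.
      * pose proof (Rs_gplus_le_RL _ _ (IHg g (or_introl Hg))). pose proof (Ls_ge_left G g Hg). lra.
      * pose proof (Rs_gplus_le_LR _ _ (IHh h (or_introl Hh))). pose proof (Ls_ge_left H h Hh). lra.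
  - destruct (Rs_spec H) as [[E _]|[h [Hh Eh]]].
    + rewrite (dnz_num_of_right_nil H HH E), Rs_gplus_num, Rs_num. lra.
    + pose proof (Rs_le_right _ _ (in_right_gplusr h G H Hh)).
      pose proof (Ls_gplus_le _ _ (IHh h (or_intror Hh))). lra.
  - destruct (Rs_spec G) as [[E _]|[g [Hg Eg]]].
    + rewrite (dnz_num_of_right_nil G HG E), Rs_num_gplus, Rs_num. lra.
    + pose proof (Rs_le_right _ _ (in_right_gplusl g G H Hg)).
      pose proof (Ls_gplus_le _ _ (IHg g (or_intror Hg))). lra.
  - apply Rs_ge_intro.
    + intros [E1 E2]%right_gplus_nil. rewrite rightscore_gplus, (Rs_nil G E1), (Rs_nil H E2). lra.
    + intros x [[g [Hg ->]]|[h [Hh ->]]]%in_right_gplus.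
      * pose proof (Ls_gplus_ge_LR _ _ (IHg g (or_intror Hg))).
        pose proof (Rs_le_right G g Hg). lra.
      * pose proof (Ls_gplus_ge_RL _ _ (IHh h (or_intror Hh))).
        pose proof (Rs_le_right H h Hh). lra.
  - destruct (Ls_spec G) as [[E _]|[g [Hg Eg]]].
    + rewrite (dnz_num_of_left_nil G HG E), Ls_num_gplus, Ls_num. lra.
    + pose proof (Ls_ge_left _ _ (in_left_gplusl g G H Hg)).
      pose proof (Rs_gplus_ge _ _ (IHg g (or_introl Hg))). lra.
  - destruct (Ls_spec H) as [[E _]|[h [Hh Eh]]].
    + rewrite (dnz_num_of_left_nil H HH E), Ls_gplus_num, Ls_num. lra.
    + pose proof (Ls_ge_left _ _ (in_left_gplusr h G H Hh)).
      pose proof (Rs_gplus_ge _ _ (IHh h (or_introl Hh))). lra.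
Qed.

Lemma dnz_gplus G H : dnz G -> dnz H -> dnz (gplus G H).
Proof.
  revert G H. apply (game_pair_ind (fun G H => dnz G -> dnz H -> dnz (gplus G H))).
  intros G H IHG IHH HG HH.
  constructor.
  - assert (IHg : forall g, is_option g G -> dnz (gplus g H))
      by (intros g Hg; exact (IHG g Hg (dnz_option G g HG Hg) HH)).
    assert (IHh : forall h, is_option h H -> dnz (gplus G h))
      by (intros h Hh; exact (IHH h Hh HG (dnz_option H h HH Hh))).
    intros x [Hx|Hx]; [apply in_left_gplus in Hx|apply in_right_gplus in Hx];
      destruct Hx as [[g [Hg ->]]|[h [Hh ->]]]; unfold is_option in *; auto.
  - rewrite left_gplus_nil, right_gplus_nil, (dnz_dicotic G HG), (dnz_dicotic H HH). reflexivity.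
  - intros [E1 E2]%left_gplus_nil.
    rewrite (dnz_num_of_left_nil G HG E1), (dnz_num_of_left_nil H HH E2). reflexivity.
  - pose proof (Rs_gplus_le_LR _ _ (dnz_sum_bounds G H HG HH)).
    pose proof (Ls_gplus_ge_LR _ _ (dnz_sum_bounds G H HG HH)). pose proof (dnz_Rs_le_Ls H HH). lra.
Qed.

Lemma Forall_mid {A} (P : A -> Prop) l1 a l2 :
  Forall P (l1 ++ a :: l2) <-> P a /\ Forall P (l1 ++ l2).
Proof. rewrite !Forall_app, Forall_cons_iff. tauto. Qed.

Definition sumg (l : list game) : game := fold_right gplus (num 0) l.

Definition sumR (f : game -> R) (l : list game) : R := fold_right Rplus 0 (map f l).

Lemma sumR_mid f l1 a l2 : sumR f (l1 ++ a :: l2) = f a + sumR f (l1 ++ l2).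
Proof. unfold sumR. induction l1 as [|b l1 IH]; simpl; [reflexivity|]. rewrite IH. ring. Qed.

Lemma sumR_ext f g l : (forall a, In a l -> f a = g a) -> sumR f l = sumR g l.
Proof. intros E. unfold sumR. f_equal. apply map_ext_in, E. Qed.

Lemma sumR_map f h l : sumR f (map h l) = sumR (fun x => f (h x)) l.
Proof. unfold sumR. rewrite map_map. reflexivity. Qed.

Lemma in_left_sumg x l : In x (leftopts (sumg l)) <->
  exists l1 a l2 z, l = l1 ++ a :: l2 /\ In z (leftopts a) /\ x = sumg (l1 ++ z :: l2).
Proof.
  split.
  - revert x. induction l as [|b l IH]; intros x Hx; [destruct Hx|].
    apply in_left_gplus in Hx as [[g [Hg ->]]|[h [Hh ->]]].
    + exists [], b, l, g. auto.
    + destruct (IH h Hh) as (l1 & a & l2 & z & -> & Hz & ->). exists (b :: l1), a, l2, z. auto.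
  - intros (l1 & a & l2 & z & -> & Hz & ->). induction l1 as [|b l1 IH]; simpl.
    + apply in_left_gplusl, Hz.
    + apply in_left_gplusr, IH.
Qed.

Lemma in_right_sumg x l : In x (rightopts (sumg l)) <->
  exists l1 a l2 z, l = l1 ++ a :: l2 /\ In z (rightopts a) /\ x = sumg (l1 ++ z :: l2).
Proof.
  split.
  - revert x. induction l as [|b l IH]; intros x Hx; [destruct Hx|].
    apply in_right_gplus in Hx as [[g [Hg ->]]|[h [Hh ->]]].
    + exists [], b, l, g. auto.
    + destruct (IH h Hh) as (l1 & a & l2 & z & -> & Hz & ->). exists (b :: l1), a, l2, z. auto.
  - intros (l1 & a & l2 & z & -> & Hz & ->). induction l1 as [|b l1 IH]; simpl.
    + apply in_right_gplusl, Hz.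
    + apply in_right_gplusr, IH.
Qed.

Lemma left_sumg_nil l : leftopts (sumg l) = [] <-> Forall (fun a => leftopts a = []) l.
Proof.
  induction l as [|b l IH]; simpl; [split; auto|].
  rewrite left_gplus_nil, IH, Forall_cons_iff. reflexivity.
Qed.

Lemma right_sumg_nil l : rightopts (sumg l) = [] <-> Forall (fun a => rightopts a = []) l.
Proof.
  induction l as [|b l IH]; simpl; [split; auto|].
  rewrite right_gplus_nil, IH, Forall_cons_iff. reflexivity.
Qed.

Lemma leftscore_sumg l : leftscore (sumg l) = sumR leftscore l.
Proof.
  induction l as [|b l IH]; simpl; [reflexivity|]. rewrite leftscore_gplus, IH. reflexivity.
Qed.

Lemma rightscore_sumg l : rightscore (sumg l) = sumR rightscore l.
Proof.
  induction l as [|b l IH]; simpl; [reflexivity|]. rewrite rightscore_gplus, IH. reflexivity.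
Qed.

Lemma dnz_sumg l : Forall dnz l -> dnz (sumg l).
Proof. induction 1; [apply dnz_num|apply dnz_gplus; assumption]. Qed.

Lemma Ls_sumg_le l : Forall dnz l -> Ls (sumg l) <= sumR Ls l.
Proof.
  induction 1 as [|b l Hb Hl IH]; [apply Rle_refl|].
  pose proof (Ls_gplus_le _ _ (dnz_sum_bounds b (sumg l) Hb (dnz_sumg l Hl))).
  unfold sumR in *. simpl. lra.
Qed.

Lemma Rs_sumg_ge l : Forall dnz l -> sumR Rs l <= Rs (sumg l).
Proof.
  induction 1 as [|b l Hb Hl IH]; [apply Rle_refl|].
  pose proof (Rs_gplus_ge _ _ (dnz_sum_bounds b (sumg l) Hb (dnz_sumg l Hl))).
  unfold sumR in *. simpl. lra.
Qed.

Lemma bisim_sumg_mid l1 a l2 : bisim (sumg (l1 ++ a :: l2)) (gplus a (sumg (l1 ++ l2))).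
Proof.
  induction l1 as [|b l1 IH]; simpl; [apply bisim_refl|].
  eapply bisim_trans; [apply bisim_gplus; [apply bisim_refl|exact IH]|].
  eapply bisim_trans; [apply bisim_sym, bisim_gplus_assoc|].
  eapply bisim_trans; [apply bisim_gplus; [apply bisim_gplus_comm|apply bisim_refl]|].
  apply bisim_gplus_assoc.
Qed.

Lemma Ls_sumg_mid l1 a l2 : Ls (sumg (l1 ++ a :: l2)) = Ls (gplus a (sumg (l1 ++ l2))).
Proof. apply bisim_Ls, bisim_sumg_mid. Qed.

Lemma Rs_sumg_mid l1 a l2 : Rs (sumg (l1 ++ a :: l2)) = Rs (gplus a (sumg (l1 ++ l2))).
Proof. apply bisim_Rs, bisim_sumg_mid. Qed.

Lemma bisim_gplus_num_mid w c S : bisim (gplus (gplus w (num c)) S) (gplus (gplus w S) (num c)).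
Proof.
  eapply bisim_trans; [apply bisim_gplus_assoc|].
  eapply bisim_trans; [apply bisim_gplus; [apply bisim_refl|apply bisim_gplus_comm]|].
  apply bisim_sym, bisim_gplus_assoc.
Qed.

Lemma Ls_sumg_shift l1 w c l2 :
  Ls (sumg (l1 ++ gplus w (num c) :: l2)) = Ls (sumg (l1 ++ w :: l2)) + c.
Proof.
  rewrite !Ls_sumg_mid, (bisim_Ls _ _ (bisim_gplus_num_mid _ _ _)). apply Ls_gplus_num.
Qed.

Lemma Rs_sumg_shift l1 w c l2 :
  Rs (sumg (l1 ++ gplus w (num c) :: l2)) = Rs (sumg (l1 ++ w :: l2)) + c.
Proof.
  rewrite !Rs_sumg_mid, (bisim_Rs _ _ (bisim_gplus_num_mid _ _ _)). apply Rs_gplus_num.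
Qed.

(** * Cooling *)

Lemma lipschitz_continuity (h : R -> R) K :
  0 < K -> (forall x y, Rabs (h x - h y) <= K * Rabs (x - y)) -> continuity h.
Proof.
  intros HK Hh x eps Heps. exists (eps / K). split; [apply Rdiv_lt_0_compat; lra|].
  intros y [_ Hy]. simpl in *. unfold R_dist in *.
  apply Rle_lt_trans with (K * Rabs (y - x)); [apply Hh|].
  apply Rmult_lt_compat_l with (r := K) in Hy; [|exact HK].
  replace (K * (eps / K)) with eps in Hy by (field; lra). exact Hy.
Qed.

Lemma Rmax_0_lipschitz x y : Rabs (Rmax 0 x - Rmax 0 y) <= Rabs (x - y).
Proof.
  unfold Rmax. destruct (Rle_dec 0 x), (Rle_dec 0 y); unfold Rabs; repeat destruct Rcase_abs; lra.
Qed.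

Lemma antitone_has_zero (f : R -> R) T :
  (forall s t, 0 <= s <= t -> f t <= f s <= f t + 2 * (t - s)) ->
  0 <= f 0 -> 0 <= T -> f T < 0 -> exists z0, 0 <= z0 /\ f z0 = 0.
Proof.
  intros Hf Hf0 HT HfT.
  (* Extending [f] by [f 0] to the left makes it continuous on all of R. *)
  set (g := fun x => f (Rmax 0 x)).
  assert (Hg : continuity g).
  { apply (lipschitz_continuity g 2); [lra|]. intros x y. unfold g.
    eapply Rle_trans; [|apply Rmult_le_compat_l; [lra|apply Rmax_0_lipschitz]].
    pose proof (Rmax_l 0 x). pose proof (Rmax_l 0 y).
    destruct (Rle_dec (Rmax 0 x) (Rmax 0 y)).
    - destruct (Hf (Rmax 0 x) (Rmax 0 y)); [lra|].
      rewrite Rabs_pos_eq, Rabs_left1 by lra. lra.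
    - destruct (Hf (Rmax 0 y) (Rmax 0 x)); [lra|].
      rewrite Rabs_left1, Rabs_pos_eq by lra. lra. }
  destruct (IVT_cor g 0 T Hg HT) as [z0 [Hz0 Ez0]].
  - unfold g. rewrite !Rmax_right by lra. nra.
  - exists z0. unfold g in Ez0. rewrite Rmax_right in Ez0 by lra. split; [lra|exact Ez0].
Qed.

Lemma antitone_first_zero (f : R -> R) T :
  (forall s t, 0 <= s <= t -> f t <= f s <= f t + 2 * (t - s)) ->
  0 <= f 0 -> 0 <= T -> f T < 0 ->
  let z := real (Glb_Rbar (fun t => 0 <= t /\ f t = 0)) in
  0 <= z /\ f z = 0 /\ forall t, 0 <= t <= z -> 0 <= f t.
Proof.
  intros Hf Hf0 HT HfT z.
  destruct (antitone_has_zero f T Hf Hf0 HT HfT) as [z0 [Hz0 Ez0]].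
  set (E := fun t => 0 <= t /\ f t = 0) in z.
  destruct (Glb_Rbar_correct E) as [Hlb Hglb].
  assert (Hle : Rbar_le (Glb_Rbar E) z0) by (apply Hlb; split; assumption).
  assert (Hge : Rbar_le 0 (Glb_Rbar E)) by (apply Hglb; intros x [Hx _]; exact Hx).
  unfold z. destruct (Glb_Rbar E) as [s| |]; simpl in Hle, Hge |- *; try contradiction.
  assert (Hs : f s = 0).
  { destruct (Rtotal_order (f s) 0) as [Hneg|[Hnull|Hpos]]; [|exact Hnull|].
    - destruct (Hf s z0); lra.
    - (* A zero e satisfies f s <= 2 (e - s), so s + f s / 4 would be a larger lower bound. *)
      exfalso. assert (Hlb' : is_lb_Rbar E (s + f s / 4)).
      { intros e [He0 He]. simpl. destruct (Hf s e) as [_ H2].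
        - split; [exact Hge|]. apply (Hlb e). split; assumption.
        - lra. }
      specialize (Hglb _ Hlb'). simpl in Hglb. lra. }
  split; [exact Hge|]. split; [exact Hs|].
  intros t Ht. destruct (Hf t s); lra.
Qed.

Lemma cool_unfold g t : cool g t =
  if is_numberb g then g
  else if Rle_dec t (temperature g) then tilde g t else num (Ls (tilde g (temperature g))).
Proof.
  destruct g as [L l R r]. unfold temperature. cbn [cool]. destruct (is_numberb _); reflexivity.
Qed.

Lemma cool_number g t : is_numberb g = true -> cool g t = g.
Proof. intros E. rewrite cool_unfold, E. reflexivity. Qed.

Lemma temperature_number g : is_numberb g = true -> temperature g = 0.
Proof. intros E. unfold temperature. rewrite E. reflexivity. Qed.

Lemma number_eq_num g : is_numberb g = true -> g = num (Ls g).
Proof.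
  destruct g as [[|a L] l [|b R] r]; simpl; try discriminate.
  destruct (Req_EM_T l r); [|discriminate]. intros _. subst. reflexivity.
Qed.

Lemma not_number_of_left a z : In z (leftopts a) -> is_numberb a = false.
Proof.
  intros Hz. destruct (is_numberb a) eqn:N; [|reflexivity].
  rewrite (number_eq_num a N) in Hz. destruct Hz.
Qed.

Lemma not_number_of_right a z : In z (rightopts a) -> is_numberb a = false.
Proof.
  intros Hz. destruct (is_numberb a) eqn:N; [|reflexivity].
  rewrite (number_eq_num a N) in Hz. destruct Hz.
Qed.

Lemma dnz_number_iff g : dnz g -> is_numberb g = true <-> leftopts g = [].
Proof.
  intros Hg. split.
  - intros E. rewrite (number_eq_num g E). reflexivity.
  - intros E. rewrite (dnz_num_of_left_nil g Hg E). simpl.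
    destruct (Req_EM_T (Ls g) (Ls g)); [reflexivity|contradiction].
Qed.

Lemma dnz_not_number g : dnz g -> is_numberb g = false -> leftopts g <> [] /\ rightopts g <> [].
Proof.
  intros Hg E. rewrite <- (dnz_dicotic g Hg), <- (dnz_number_iff g Hg), E.
  split; discriminate.
Qed.

Lemma leftopts_tilde Y t :
  leftopts (tilde Y t) = map (fun x => gplus (cool x t) (num (- t))) (leftopts Y).
Proof. destruct Y; reflexivity. Qed.

Lemma rightopts_tilde Y t :
  rightopts (tilde Y t) = map (fun x => gplus (cool x t) (num t)) (rightopts Y).
Proof. destruct Y; reflexivity. Qed.

Lemma leftscore_tilde Y t : leftscore (tilde Y t) = leftscore Y.
Proof. destruct Y; reflexivity. Qed.

Lemma rightscore_tilde Y t : rightscore (tilde Y t) = rightscore Y.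
Proof. destruct Y; reflexivity. Qed.

Lemma in_left_tilde Y t z :
  In z (leftopts Y) -> In (gplus (cool z t) (num (- t))) (leftopts (tilde Y t)).
Proof.
  intros Hz. rewrite leftopts_tilde. apply (in_map (fun x => gplus (cool x t) (num (- t)))), Hz.
Qed.

Lemma in_right_tilde Y t z :
  In z (rightopts Y) -> In (gplus (cool z t) (num t)) (rightopts (tilde Y t)).
Proof.
  intros Hz. rewrite rightopts_tilde. apply (in_map (fun x => gplus (cool x t) (num t))), Hz.
Qed.

Lemma Ls_tilde_ge Y t x : In x (leftopts Y) -> Rs (cool x t) - t <= Ls (tilde Y t).
Proof.
  intros Hx. replace (Rs (cool x t) - t) with (Rs (gplus (cool x t) (num (- t))))
    by (rewrite Rs_gplus_num; ring).
  apply Ls_ge_left, in_left_tilde, Hx.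
Qed.

Lemma Rs_tilde_le Y t x : In x (rightopts Y) -> Rs (tilde Y t) <= Ls (cool x t) + t.
Proof.
  intros Hx. rewrite <- Ls_gplus_num. apply Rs_le_right, in_right_tilde, Hx.
Qed.

Lemma Ls_tilde_attained Y t : leftopts Y <> [] ->
  exists x, In x (leftopts Y) /\ Ls (tilde Y t) = Rs (cool x t) - t.
Proof.
  intros HY. destruct (Ls_spec (tilde Y t)) as [[E _]|[y [Hy ->]]].
  - rewrite leftopts_tilde in E. apply map_eq_nil in E. contradiction.
  - rewrite leftopts_tilde in Hy. apply in_map_iff in Hy as [x [<- Hx]].
    exists x. split; [exact Hx|]. rewrite Rs_gplus_num. ring.
Qed.

Lemma Rs_tilde_attained Y t : rightopts Y <> [] ->
  exists x, In x (rightopts Y) /\ Rs (tilde Y t) = Ls (cool x t) + t.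
Proof.
  intros HY. destruct (Rs_spec (tilde Y t)) as [[E _]|[y [Hy ->]]].
  - rewrite rightopts_tilde in E. apply map_eq_nil in E. contradiction.
  - rewrite rightopts_tilde in Hy. apply in_map_iff in Hy as [x [<- Hx]].
    exists x. split; [exact Hx|]. apply Ls_gplus_num.
Qed.

Definition cooling_monotone (F : R -> game) : Prop :=
  forall s t, 0 <= s <= t ->
    (Ls (F t) <= Ls (F s) <= Ls (F t) + (t - s)) /\ (Rs (F s) <= Rs (F t) <= Rs (F s) + (t - s)).

Lemma tilde_monotone Y :
  leftopts Y <> [] -> rightopts Y <> [] ->
  (forall x, is_option x Y -> cooling_monotone (cool x)) -> cooling_monotone (tilde Y).
Proof.
  intros HL HR Hopt s t Hst.
  destruct (Ls_tilde_attained Y s HL) as [xs [Hxs Es]], (Ls_tilde_attained Y t HL) as [xt [Hxt Et]].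
  destruct (Rs_tilde_attained Y s HR) as [ys [Hys Fs]], (Rs_tilde_attained Y t HR) as [yt [Hyt Ft]].
  destruct (Hopt xs (or_introl Hxs) s t Hst) as [_ Mxs].
  destruct (Hopt xt (or_introl Hxt) s t Hst) as [_ Mxt].
  destruct (Hopt ys (or_intror Hys) s t Hst) as [Mys _].
  destruct (Hopt yt (or_intror Hyt) s t Hst) as [Myt _].
  pose proof (Ls_tilde_ge Y s xt Hxt). pose proof (Ls_tilde_ge Y t xs Hxs).
  pose proof (Rs_tilde_le Y s yt Hyt). pose proof (Rs_tilde_le Y t ys Hys).
  lra.
Qed.

Record cooling_spec (Y : game) : Prop := {
  spec_dnz_cool : forall t, 0 <= t -> dnz (cool Y t);
  spec_cool_monotone : cooling_monotone (cool Y);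
  spec_Ls_cool_0 : Ls (cool Y 0) = Ls Y;
  spec_Rs_cool_0 : Rs (cool Y 0) = Rs Y;
  spec_temperature_ge0 : 0 <= temperature Y;
  spec_tilde_balanced : is_numberb Y = false ->
    Ls (tilde Y (temperature Y)) = Rs (tilde Y (temperature Y)) }.

Lemma cooling_spec_number Y : dnz Y -> is_numberb Y = true -> cooling_spec Y.
Proof.
  intros HY E. constructor; rewrite ?temperature_number by exact E.
  - intros t _. rewrite cool_number by exact E. exact HY.
  - intros s t Hst. rewrite !cool_number by exact E. lra.
  - rewrite cool_number by exact E. reflexivity.
  - rewrite cool_number by exact E. reflexivity.
  - apply Rle_refl.
  - congruence.
Qed.

Lemma list_upper_bound {A} (f : A -> R) (l : list A) : exists M, forall x, In x l -> f x <= M.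
Proof.
  induction l as [|a l [M HM]]; [exists 0; intros _ []|].
  exists (Rmax (f a) M). intros x [<-|Hx]; [apply Rmax_l|].
  eapply Rle_trans; [apply HM, Hx|apply Rmax_r].
Qed.

Section CoolingNotNumber.

Variable Y : game.
Hypothesis HY : dnz Y.
Hypothesis HnumY : is_numberb Y = false.
Hypothesis Hopt : forall x, is_option x Y -> cooling_spec x.

Let HL : leftopts Y <> [] := proj1 (dnz_not_number Y HY HnumY).
Let HR : rightopts Y <> [] := proj2 (dnz_not_number Y HY HnumY).

Let HmonoY : cooling_monotone (tilde Y) :=
  tilde_monotone Y HL HR (fun x Hx => spec_cool_monotone x (Hopt x Hx)).

Lemma Ls_tilde_0 : Ls (tilde Y 0) = Ls Y.
Proof.
  rewrite <- (Rplus_0_r (Ls Y)). apply Ls_shift_of_match.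
  - rewrite leftopts_tilde. apply egli_milner_map_r. intros x Hx.
    rewrite Rs_gplus_num, (spec_Rs_cool_0 x (Hopt x (or_introl Hx))). ring.
  - intros _. rewrite leftscore_tilde. ring.
Qed.

Lemma Rs_tilde_0 : Rs (tilde Y 0) = Rs Y.
Proof.
  rewrite <- (Rplus_0_r (Rs Y)). apply Rs_shift_of_match.
  - rewrite rightopts_tilde. apply egli_milner_map_r. intros x Hx.
    rewrite Ls_gplus_num, (spec_Ls_cool_0 x (Hopt x (or_intror Hx))). ring.
  - intros _. rewrite rightscore_tilde. ring.
Qed.

Lemma tilde_eventually_cold : exists T, 0 <= T /\ Ls (tilde Y T) - Rs (tilde Y T) < 0.
Proof.
  destruct (list_upper_bound Ls (leftopts Y)) as [ML HML].
  destruct (list_upper_bound (fun y => - Rs y) (rightopts Y)) as [MR HMR].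
  set (T := Rabs (ML + MR) + 1).
  assert (HT : 0 <= T) by (pose proof (Rabs_pos (ML + MR)); unfold T; lra).
  exists T. split; [exact HT|].
  destruct (Ls_tilde_attained Y T HL) as [x [Hx ->]], (Rs_tilde_attained Y T HR) as [y [Hy ->]].
  destruct (Hopt x (or_introl Hx)) as [Dx Mx Lx _ _ _].
  destruct (Hopt y (or_intror Hy)) as [Dy My _ Ry _ _].
  pose proof (dnz_Rs_le_Ls _ (Dx T HT)). pose proof (dnz_Rs_le_Ls _ (Dy T HT)).
  destruct (Mx 0 T (conj (Rle_refl 0) HT)) as [[Mx1 _] _].
  destruct (My 0 T (conj (Rle_refl 0) HT)) as [_ [My1 _]].
  pose proof (HML x Hx). pose proof (HMR y Hy). pose proof (Rle_abs (ML + MR)).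
  unfold T in *. lra.
Qed.

Lemma dnz_tilde t : 0 <= t -> Rs (tilde Y t) <= Ls (tilde Y t) -> dnz (tilde Y t).
Proof.
  intros Ht Hnz.
  assert (EL : leftopts (tilde Y t) <> [])
    by (rewrite leftopts_tilde; intros E%map_eq_nil; contradiction).
  assert (ER : rightopts (tilde Y t) <> [])
    by (rewrite rightopts_tilde; intros E%map_eq_nil; contradiction).
  constructor; [|tauto|contradiction|exact Hnz].
  intros z [Hz|Hz]; [rewrite leftopts_tilde in Hz|rewrite rightopts_tilde in Hz];
    apply in_map_iff in Hz as [x [<- Hx]]; apply dnz_gplus; try apply dnz_num;
    apply (spec_dnz_cool x); [apply Hopt; left|apply Ht|apply Hopt; right|apply Ht]; exact Hx.
Qed.

Lemma temperature_first_balance :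
  0 <= temperature Y /\ Ls (tilde Y (temperature Y)) = Rs (tilde Y (temperature Y)) /\
  forall t, 0 <= t <= temperature Y -> Rs (tilde Y t) <= Ls (tilde Y t).
Proof.
  destruct tilde_eventually_cold as [T [HT HcoldT]].
  assert (Htemp : temperature Y =
    real (Glb_Rbar (fun t => 0 <= t /\ Ls (tilde Y t) - Rs (tilde Y t) = 0))).
  { unfold temperature, t0_of. rewrite HnumY. f_equal. apply Glb_Rbar_eqset.
    intros t. split; intros [? ?]; split; lra. }
  destruct (antitone_first_zero (fun t => Ls (tilde Y t) - Rs (tilde Y t)) T) as [H0 [Hz Hpos]].
  - intros s t Hst. destruct (HmonoY s t Hst). lra.
  - rewrite Ls_tilde_0, Rs_tilde_0. pose proof (dnz_Rs_le_Ls Y HY). lra.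
  - exact HT.
  - exact HcoldT.
  - rewrite Htemp. split; [exact H0|]. split; [lra|].
    intros t Ht. specialize (Hpos t Ht). simpl in Hpos. lra.
Qed.

Lemma cooling_spec_not_number : cooling_spec Y.
Proof.
  destruct temperature_first_balance as [Hge0 [Hbal Hnz]].
  set (s0 := temperature Y) in *.
  assert (Ecool : forall t, cool Y t = if Rle_dec t s0 then tilde Y t else num (Ls (tilde Y s0)))
    by (intros t; rewrite cool_unfold, HnumY; reflexivity).
  constructor; [| | | |exact Hge0|intros _; exact Hbal].
  - intros t Ht. rewrite Ecool. destruct (Rle_dec t s0).
    + apply dnz_tilde; [exact Ht|apply Hnz; lra].
    + apply dnz_num.
  - intros s t Hst. rewrite !Ecool.
    destruct (Rle_dec t s0), (Rle_dec s s0); rewrite ?Ls_num, ?Rs_num.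
    + apply HmonoY, Hst.
    + lra.
    + destruct (HmonoY s s0) as [? ?]; lra.
    + lra.
  - rewrite Ecool. destruct (Rle_dec 0 s0); [apply Ls_tilde_0|lra].
  - rewrite Ecool. destruct (Rle_dec 0 s0); [apply Rs_tilde_0|lra].
Qed.

End CoolingNotNumber.

Lemma dnz_cooling_spec Y : dnz Y -> cooling_spec Y.
Proof.
  induction Y as [L l R r IHL IHR] using game_ind_opts. intros HY.
  destruct (is_numberb (Gm L l R r)) eqn:E; [apply cooling_spec_number; assumption|].
  apply cooling_spec_not_number; [exact HY|exact E|].
  intros x [Hx|Hx]; [apply IHL|apply IHR]; auto;
    [apply (dnz_left _ _ HY Hx)|apply (dnz_right _ _ HY Hx)].
Qed.

Lemma dnz_cool Y t : dnz Y -> 0 <= t -> dnz (cool Y t).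
Proof. intros HY. apply spec_dnz_cool, dnz_cooling_spec, HY. Qed.

Lemma temperature_ge0 Y : dnz Y -> 0 <= temperature Y.
Proof. intros HY. apply spec_temperature_ge0, dnz_cooling_spec, HY. Qed.

Lemma tilde_temperature_balanced Y : dnz Y -> is_numberb Y = false ->
  Ls (tilde Y (temperature Y)) = Rs (tilde Y (temperature Y)).
Proof. intros HY. apply spec_tilde_balanced, dnz_cooling_spec, HY. Qed.

Lemma dnz_tilde_monotone Y : dnz Y -> is_numberb Y = false -> cooling_monotone (tilde Y).
Proof.
  intros HY E. destruct (dnz_not_number Y HY E) as [HL HR].
  apply tilde_monotone; [exact HL|exact HR|].
  intros x Hx. apply spec_cool_monotone, dnz_cooling_spec, (dnz_option Y x HY Hx).
Qed.

(* The mast value of thermography: [cool Y t = num (mast Y)] above the temperature. *)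
Definition mast (Y : game) : R := Ls (cool Y (temperature Y)).

Lemma mast_number Y : is_numberb Y = true -> Y = num (mast Y).
Proof. intros E. unfold mast. rewrite cool_number by exact E. apply number_eq_num, E. Qed.

Lemma mast_not_number Y : is_numberb Y = false -> mast Y = Ls (tilde Y (temperature Y)).
Proof.
  intros E. unfold mast. rewrite cool_unfold, E.
  destruct (Rle_dec (temperature Y) (temperature Y)); [reflexivity|lra].
Qed.

Lemma cool_cases Y t : is_numberb Y = false ->
  (temperature Y < t /\ cool Y t = num (mast Y)) \/ (t <= temperature Y /\ cool Y t = tilde Y t).
Proof.
  intros E. rewrite cool_unfold, E, mast_not_number by exact E.
  destruct (Rle_dec t (temperature Y)); [right|left]; split; auto; lra.
Qed.

Lemma cool_after_temperature Y t : temperature Y < t -> cool Y t = num (mast Y).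
Proof.
  intros Ht. destruct (is_numberb Y) eqn:E.
  - rewrite cool_number by exact E. apply mast_number, E.
  - destruct (cool_cases Y t E) as [[_ ?]|[? _]]; [assumption|lra].
Qed.

Lemma stops_after_temperature Y s : dnz Y -> temperature Y <= s ->
  Ls (cool Y s) = mast Y /\ Rs (cool Y s) = mast Y.
Proof.
  intros HY Hs. destruct (Rle_lt_or_eq_dec _ _ Hs) as [Hlt|<-].
  - rewrite cool_after_temperature by exact Hlt. split; reflexivity.
  - split; [reflexivity|]. unfold mast. destruct (is_numberb Y) eqn:E.
    + rewrite cool_number, (number_eq_num Y E) by exact E. reflexivity.
    + destruct (cool_cases Y (temperature Y) E) as [[? _]|[_ ->]]; [lra|].
      symmetry. apply (tilde_temperature_balanced Y HY E).
Qed.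

Lemma Rs_cool_left_le_mast Y t z : dnz Y -> is_numberb Y = false -> temperature Y < t ->
  In z (leftopts Y) -> Rs (cool z t) <= mast Y + t.
Proof.
  intros HY E Ht Hz. rewrite mast_not_number by exact E.
  pose proof (Ls_tilde_ge Y t z Hz).
  pose proof (temperature_ge0 Y HY).
  destruct (dnz_tilde_monotone Y HY E (temperature Y) t) as [[? _] _]; [lra|]. lra.
Qed.

Lemma Ls_cool_right_ge_mast Y t z : dnz Y -> is_numberb Y = false -> temperature Y < t ->
  In z (rightopts Y) -> mast Y - t <= Ls (cool z t).
Proof.
  intros HY E Ht Hz. rewrite mast_not_number by exact E.
  rewrite (tilde_temperature_balanced Y HY E).
  pose proof (Rs_tilde_le Y t z Hz).
  pose proof (temperature_ge0 Y HY).
  destruct (dnz_tilde_monotone Y HY E (temperature Y) t) as [_ [? _]]; [lra|]. lra.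
Qed.

Lemma mast_left_attained Y : dnz Y -> is_numberb Y = false ->
  exists z, In z (leftopts Y) /\ Rs (cool z (temperature Y)) - temperature Y = mast Y.
Proof.
  intros HY E. destruct (Ls_tilde_attained Y (temperature Y)) as [z [Hz Ez]].
  - apply (dnz_not_number Y HY E).
  - exists z. rewrite mast_not_number by exact E. auto.
Qed.

Lemma mast_right_attained Y : dnz Y -> is_numberb Y = false ->
  exists z, In z (rightopts Y) /\ Ls (cool z (temperature Y)) + temperature Y = mast Y.
Proof.
  intros HY E. destruct (Rs_tilde_attained Y (temperature Y)) as [z [Hz Ez]].
  - apply (dnz_not_number Y HY E).
  - exists z. rewrite mast_not_number, (tilde_temperature_balanced Y HY E)
      by exact E. auto.
Qed.

(** * Cooled sums *)

Fixpoint gsize (g : game) : nat :=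
  match g with Gm L _ R _ => S (list_sum (map gsize L) + list_sum (map gsize R)) end.

Lemma in_list_sum_le x (L : list nat) : In x L -> (x <= list_sum L)%nat.
Proof. induction L as [|y L IH]; simpl; [intros []|intros [->|Hx]; [|specialize (IH Hx)]; lia]. Qed.

Lemma gsize_option x g : is_option x g -> (gsize x < gsize g)%nat.
Proof.
  destruct g as [L l R r]. cbn [gsize].
  intros [Hx|Hx]; cbn [leftopts rightopts] in Hx;
    pose proof (in_list_sum_le _ _ (in_map gsize _ x Hx)); lia.
Qed.

Lemma component_ind (P : list game -> Prop) :
  (forall l, (forall l1 a l2 z, l = l1 ++ a :: l2 -> is_option z a -> P (l1 ++ z :: l2)) -> P l) ->
  forall l, P l.
Proof.
  intros IH l.
  induction l as [l IHl] using
    (well_founded_induction (Wf_nat.well_founded_ltof _ (fun l => list_sum (map gsize l)))).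
  apply IH. intros l1 a l2 z -> Hz. apply IHl. unfold Wf_nat.ltof.
  rewrite !map_app, !list_sum_app. simpl. pose proof (gsize_option z a Hz). lia.
Qed.

Lemma map_eq_mid {A B} (f : A -> B) l m1 b m2 : map f l = m1 ++ b :: m2 ->
  exists l1 a l2, l = l1 ++ a :: l2 /\ m1 = map f l1 /\ b = f a /\ m2 = map f l2.
Proof.
  intros (l1 & l' & -> & <- & E)%map_eq_app.
  apply map_eq_cons in E as (a & l2 & -> & <- & <-). exists l1, a, l2. auto.
Qed.

Lemma exists_max_in {A} (f : A -> R) (P : A -> Prop) l : (exists a, In a l /\ P a) ->
  exists a, In a l /\ P a /\ forall b, In b l -> P b -> f b <= f a.
Proof.
  induction l as [|c l IH]; intros [a0 [Ha0 Pa0]]; [destruct Ha0|].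
  destruct (classic (exists a, In a l /\ P a)) as [Hex|Hnex].
  - destruct (IH Hex) as [a [Ha [Pa Hmax]]].
    destruct (classic (P c /\ f a < f c)) as [[Pc Hc]|Hc].
    + exists c. split; [left; reflexivity|]. split; [exact Pc|].
      intros b [<-|Hb] Pb; [lra|]. specialize (Hmax b Hb Pb). lra.
    + exists a. split; [right; exact Ha|]. split; [exact Pa|].
      intros b [<-|Hb] Pb; [|auto]. apply Rnot_lt_le. intros Hlt. apply Hc. auto.
  - destruct Ha0 as [<-|Ha0]; [|exfalso; eauto].
    exists c. split; [left; reflexivity|]. split; [exact Pa0|].
    intros b [<-|Hb] Pb; [lra|]. exfalso; eauto.
Qed.

Definition is_number g : Prop := is_numberb g = true.

Lemma numbers_or_hottest l : Forall dnz l ->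
  Forall is_number l \/
  exists l1 a l2, l = l1 ++ a :: l2 /\ is_numberb a = false /\
    forall b, In b l -> temperature b <= temperature a.
Proof.
  intros Hl. destruct (classic (exists a, In a l /\ is_numberb a = false)) as [Hex|Hnex].
  - right. destruct (exists_max_in temperature (fun a => is_numberb a = false) l Hex)
      as [a [Ha [Na Hmax]]].
    destruct (in_split a l Ha) as [l1 [l2 ->]]. exists l1, a, l2.
    split; [reflexivity|]. split; [exact Na|]. intros b Hb.
    destruct (is_numberb b) eqn:Nb; [|apply Hmax; assumption].
    rewrite temperature_number by exact Nb.
    apply (temperature_ge0 a), (proj1 (Forall_forall _ _) Hl a Ha).
  - left. apply Forall_forall. intros a Ha. unfold is_number.
    destruct (is_numberb a) eqn:Na; [reflexivity|]. exfalso; eauto.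
Qed.

Definition cool_list (t : R) (l : list game) : list game := map (fun x => cool x t) l.

Lemma cool_list_mid t l1 a l2 :
  cool_list t (l1 ++ a :: l2) = cool_list t l1 ++ cool a t :: cool_list t l2.
Proof. unfold cool_list. rewrite map_app. reflexivity. Qed.

Lemma cool_list_app t l1 l2 : cool_list t (l1 ++ l2) = cool_list t l1 ++ cool_list t l2.
Proof. unfold cool_list. apply map_app. Qed.

Lemma dnz_cool_list t l : 0 <= t -> Forall dnz l -> Forall dnz (cool_list t l).
Proof.
  intros Ht Hl. unfold cool_list. rewrite Forall_map. revert Hl. apply Forall_impl.
  intros a Ha. apply dnz_cool; assumption.
Qed.

Lemma cool_list_numbers t l : Forall is_number l -> cool_list t l = l.
Proof.
  intros Hl. unfold cool_list. rewrite <- (map_id l) at 2. apply map_ext_in.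
  intros a Ha. apply cool_number, (proj1 (Forall_forall _ _) Hl a Ha).
Qed.

Lemma dnz_replace l1 a l2 z :
  Forall dnz (l1 ++ a :: l2) -> is_option z a -> Forall dnz (l1 ++ z :: l2).
Proof.
  rewrite !Forall_mid. intros [Ha Hl] Hz. split; [exact (dnz_option a z Ha Hz)|exact Hl].
Qed.

Lemma numbers_of_left_sumg_nil l : Forall dnz l -> leftopts (sumg l) = [] -> Forall is_number l.
Proof.
  intros Hl E. apply left_sumg_nil in E. rewrite Forall_forall in *.
  intros a Ha. apply (dnz_number_iff a (Hl a Ha)), E, Ha.
Qed.

Lemma numbers_of_right_sumg_nil l : Forall dnz l -> rightopts (sumg l) = [] -> Forall is_number l.
Proof.
  intros Hl E. apply right_sumg_nil in E. rewrite Forall_forall in *.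
  intros a Ha. apply (dnz_number_iff a (Hl a Ha)), (dnz_dicotic a (Hl a Ha)), E, Ha.
Qed.

Lemma LRs_sumg_numbers l :
  Forall is_number l -> Ls (sumg l) = sumR mast l /\ Rs (sumg l) = sumR mast l.
Proof.
  intros Hl.
  assert (E : forall a, In a l -> a = num (mast a))
    by (intros a Ha; apply mast_number, (proj1 (Forall_forall _ _) Hl a Ha)).
  rewrite Ls_nil, Rs_nil, leftscore_sumg, rightscore_sumg.
  - split; apply sumR_ext; intros a Ha; rewrite (E a Ha) at 1; reflexivity.
  - apply right_sumg_nil, Forall_forall. intros a Ha. rewrite (E a Ha). reflexivity.
  - apply left_sumg_nil, Forall_forall. intros a Ha. rewrite (E a Ha). reflexivity.
Qed.

Lemma left_option_cool Y t b : In b (leftopts (cool Y t)) ->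
  exists z, In z (leftopts Y) /\ b = gplus (cool z t) (num (- t)).
Proof.
  intros Hb. destruct (is_numberb Y) eqn:N.
  - rewrite cool_number, (number_eq_num Y N) in Hb by exact N. destruct Hb.
  - destruct (cool_cases Y t N) as [[_ Ec]|[_ Ec]]; rewrite Ec in Hb; [destruct Hb|].
    rewrite leftopts_tilde in Hb. apply in_map_iff in Hb as [z [<- Hz]]. eauto.
Qed.

Lemma right_option_cool Y t b : In b (rightopts (cool Y t)) ->
  exists z, In z (rightopts Y) /\ b = gplus (cool z t) (num t).
Proof.
  intros Hb. destruct (is_numberb Y) eqn:N.
  - rewrite cool_number, (number_eq_num Y N) in Hb by exact N. destruct Hb.
  - destruct (cool_cases Y t N) as [[_ Ec]|[_ Ec]]; rewrite Ec in Hb; [destruct Hb|].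
    rewrite rightopts_tilde in Hb. apply in_map_iff in Hb as [z [<- Hz]]. eauto.
Qed.

Lemma cool_left_nil Y t : dnz Y -> leftopts (cool Y t) = [] -> cool Y t = num (mast Y).
Proof.
  intros HY E. destruct (is_numberb Y) eqn:N.
  - rewrite cool_number by exact N. apply mast_number, N.
  - destruct (cool_cases Y t N) as [[_ Ec]|[_ Ec]]; [exact Ec|].
    rewrite Ec, leftopts_tilde in E. apply map_eq_nil in E.
    destruct (dnz_not_number Y HY N). contradiction.
Qed.

Lemma cool_right_nil Y t : dnz Y -> rightopts (cool Y t) = [] -> cool Y t = num (mast Y).
Proof.
  intros HY E. destruct (is_numberb Y) eqn:N.
  - rewrite cool_number by exact N. apply mast_number, N.
  - destruct (cool_cases Y t N) as [[_ Ec]|[_ Ec]]; [exact Ec|].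
    rewrite Ec, rightopts_tilde in E. apply map_eq_nil in E.
    destruct (dnz_not_number Y HY N). contradiction.
Qed.

Lemma left_option_cooled_sum l t x : In x (leftopts (sumg (cool_list t l))) ->
  exists l1 a l2 z, l = l1 ++ a :: l2 /\ In z (leftopts a) /\
    Rs x = Rs (sumg (cool_list t (l1 ++ z :: l2))) - t.
Proof.
  intros (m1 & b & m2 & b' & Em & Hb' & ->)%in_left_sumg.
  destruct (map_eq_mid _ _ _ _ _ Em) as (l1 & a & l2 & -> & -> & -> & ->).
  destruct (left_option_cool a t b' Hb') as [z [Hz ->]].
  exists l1, a, l2, z. split; [reflexivity|]. split; [exact Hz|].
  rewrite Rs_sumg_shift, cool_list_mid. unfold cool_list. ring.
Qed.

Lemma right_option_cooled_sum l t x : In x (rightopts (sumg (cool_list t l))) ->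
  exists l1 a l2 z, l = l1 ++ a :: l2 /\ In z (rightopts a) /\
    Ls x = Ls (sumg (cool_list t (l1 ++ z :: l2))) + t.
Proof.
  intros (m1 & b & m2 & b' & Em & Hb' & ->)%in_right_sumg.
  destruct (map_eq_mid _ _ _ _ _ Em) as (l1 & a & l2 & -> & -> & -> & ->).
  destruct (right_option_cool a t b' Hb') as [z [Hz ->]].
  exists l1, a, l2, z. split; [reflexivity|]. split; [exact Hz|].
  rewrite Ls_sumg_shift, cool_list_mid. reflexivity.
Qed.

Lemma Ls_cooled_sum_left_nil l t : Forall dnz l -> leftopts (sumg (cool_list t l)) = [] ->
  Ls (sumg (cool_list t l)) = sumR mast l.
Proof.
  intros Hl E. rewrite Ls_nil, leftscore_sumg by exact E.
  apply left_sumg_nil in E. unfold cool_list in *. rewrite sumR_map.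
  rewrite Forall_map, Forall_forall in E. rewrite Forall_forall in Hl.
  apply sumR_ext. intros a Ha. rewrite (cool_left_nil a t (Hl a Ha) (E a Ha)). reflexivity.
Qed.

Lemma Rs_cooled_sum_right_nil l t : Forall dnz l -> rightopts (sumg (cool_list t l)) = [] ->
  Rs (sumg (cool_list t l)) = sumR mast l.
Proof.
  intros Hl E. rewrite Rs_nil, rightscore_sumg by exact E.
  apply right_sumg_nil in E. unfold cool_list in *. rewrite sumR_map.
  rewrite Forall_map, Forall_forall in E. rewrite Forall_forall in Hl.
  apply sumR_ext. intros a Ha. rewrite (cool_right_nil a t (Hl a Ha) (E a Ha)). reflexivity.
Qed.

Lemma Ls_cooled_sum_ge_left_move l1 a l2 z t :
  Forall dnz (l1 ++ a :: l2) -> 0 <= t -> In z (leftopts a) ->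
  Rs (sumg (cool_list t (l1 ++ z :: l2))) - t <= Ls (sumg (cool_list t (l1 ++ a :: l2))).
Proof.
  intros [Ha Hrest]%Forall_mid Ht Hz. pose proof (not_number_of_left a z Hz) as Na.
  rewrite !cool_list_mid.
  destruct (cool_cases a t Na) as [[Hta ->]|[_ ->]].
  - rewrite Rs_sumg_mid, Ls_sumg_mid, Ls_num_gplus, <- cool_list_app.
    assert (Hz' : dnz (cool z t)) by apply (dnz_cool z t (dnz_left a z Ha Hz) Ht).
    pose proof (Rs_gplus_le_RL _ _
      (dnz_sum_bounds _ _ Hz' (dnz_sumg _ (dnz_cool_list t _ Ht Hrest)))).
    pose proof (Rs_cool_left_le_mast a t z Ha Na Hta Hz). lra.
  - replace (Rs (sumg (cool_list t l1 ++ cool z t :: cool_list t l2)) - t)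
      with (Rs (sumg (cool_list t l1 ++ gplus (cool z t) (num (- t)) :: cool_list t l2)))
      by (rewrite Rs_sumg_shift; ring).
    apply Ls_ge_left, in_left_sumg. do 4 eexists. split; [reflexivity|].
    split; [apply in_left_tilde, Hz|reflexivity].
Qed.

Lemma Rs_cooled_sum_le_right_move l1 a l2 z t :
  Forall dnz (l1 ++ a :: l2) -> 0 <= t -> In z (rightopts a) ->
  Rs (sumg (cool_list t (l1 ++ a :: l2))) <= Ls (sumg (cool_list t (l1 ++ z :: l2))) + t.
Proof.
  intros [Ha Hrest]%Forall_mid Ht Hz. pose proof (not_number_of_right a z Hz) as Na.
  rewrite !cool_list_mid.
  destruct (cool_cases a t Na) as [[Hta ->]|[_ ->]].
  - rewrite Rs_sumg_mid, Ls_sumg_mid, Rs_num_gplus, <- cool_list_app.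
    assert (Hz' : dnz (cool z t)) by apply (dnz_cool z t (dnz_right a z Ha Hz) Ht).
    pose proof (Ls_gplus_ge_LR _ _
      (dnz_sum_bounds _ _ Hz' (dnz_sumg _ (dnz_cool_list t _ Ht Hrest)))).
    pose proof (Ls_cool_right_ge_mast a t z Ha Na Hta Hz). lra.
  - rewrite <- Ls_sumg_shift.
    apply Rs_le_right, in_right_sumg. do 4 eexists. split; [reflexivity|].
    split; [apply in_right_tilde, Hz|reflexivity].
Qed.

Lemma sumR_cool_list_frozen s m : Forall dnz m -> (forall b, In b m -> temperature b <= s) ->
  sumR Ls (cool_list s m) = sumR mast m /\ sumR Rs (cool_list s m) = sumR mast m.
Proof.
  intros Hm Hs. rewrite Forall_forall in Hm. unfold cool_list. rewrite !sumR_map.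
  split; apply sumR_ext; intros b Hb; apply stops_after_temperature; auto.
Qed.

Lemma in_mid_of_in_app {A} (b : A) l1 a l2 : In b (l1 ++ l2) -> In b (l1 ++ a :: l2).
Proof. rewrite !in_app_iff. simpl. tauto. Qed.

Definition cooled_sum_bounds (l : list game) (t : R) : Prop :=
  (Ls (sumg (cool_list t l)) <= Ls (sumg l) <= Ls (sumg (cool_list t l)) + t) /\
  (Rs (sumg (cool_list t l)) - t <= Rs (sumg l) <= Rs (sumg (cool_list t l))).

Section CooledSumStep.

Variable l : list game.
Hypothesis Hl : Forall dnz l.
Hypothesis IH : forall l1 a l2 z s, l = l1 ++ a :: l2 -> is_option z a -> 0 <= s ->
  cooled_sum_bounds (l1 ++ z :: l2) s.

Lemma sum_masts_le_Ls : sumR mast l <= Ls (sumg l).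
Proof.
  (* Left moves in the hottest component at its temperature, where all other components
     are frozen at their mast values. *)
  destruct (numbers_or_hottest l Hl) as [Hnum|(l1 & a & l2 & El & Na & Hmax)].
  - rewrite (proj1 (LRs_sumg_numbers l Hnum)). apply Rle_refl.
  - rewrite El in Hl, Hmax |- *. apply Forall_mid in Hl as Hrest. destruct Hrest as [Ha Hrest].
    pose proof (temperature_ge0 a Ha) as Hs.
    destruct (mast_left_attained a Ha Na) as [z [Hz Ez]].
    destruct (IH l1 a l2 z (temperature a) El (or_introl Hz) Hs) as [_ [HB _]].
    pose proof (Ls_ge_left (sumg (l1 ++ a :: l2)) (sumg (l1 ++ z :: l2))) as Hmove.
    assert (Hl' : Forall dnz (l1 ++ z :: l2))
      by (apply (dnz_replace l1 a); [exact Hl|left; exact Hz]).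
    pose proof (Rs_sumg_ge _ (dnz_cool_list _ _ Hs Hl')) as Hsum.
    rewrite cool_list_mid, sumR_mid, <- cool_list_app in Hsum. rewrite cool_list_mid in HB.
    rewrite (proj2 (sumR_cool_list_frozen _ _ Hrest
      (fun b Hb => Hmax b (in_mid_of_in_app b l1 a l2 Hb)))) in Hsum.
    rewrite sumR_mid. apply Rle_trans with (Rs (sumg (l1 ++ z :: l2))); [lra|].
    apply Hmove, in_left_sumg. eauto 7.
Qed.

Lemma Rs_le_sum_masts : Rs (sumg l) <= sumR mast l.
Proof.
  destruct (numbers_or_hottest l Hl) as [Hnum|(l1 & a & l2 & El & Na & Hmax)].
  - rewrite (proj2 (LRs_sumg_numbers l Hnum)). apply Rle_refl.
  - rewrite El in Hl, Hmax |- *. apply Forall_mid in Hl as Hrest. destruct Hrest as [Ha Hrest].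
    pose proof (temperature_ge0 a Ha) as Hs.
    destruct (mast_right_attained a Ha Na) as [z [Hz Ez]].
    destruct (IH l1 a l2 z (temperature a) El (or_intror Hz) Hs) as [[_ HA] _].
    pose proof (Rs_le_right (sumg (l1 ++ a :: l2)) (sumg (l1 ++ z :: l2))) as Hmove.
    assert (Hl' : Forall dnz (l1 ++ z :: l2))
      by (apply (dnz_replace l1 a); [exact Hl|right; exact Hz]).
    pose proof (Ls_sumg_le _ (dnz_cool_list _ _ Hs Hl')) as Hsum.
    rewrite cool_list_mid, sumR_mid, <- cool_list_app in Hsum. rewrite cool_list_mid in HA.
    rewrite (proj1 (sumR_cool_list_frozen _ _ Hrest
      (fun b Hb => Hmax b (in_mid_of_in_app b l1 a l2 Hb)))) in Hsum.
    rewrite sumR_mid. apply Rle_trans with (Ls (sumg (l1 ++ z :: l2))); [|lra].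
    apply Hmove, in_right_sumg. eauto 7.
Qed.

Lemma Ls_cooled_sum_le t : 0 <= t -> Ls (sumg (cool_list t l)) <= Ls (sumg l).
Proof.
  intros Ht. destruct (Ls_spec (sumg (cool_list t l))) as [[E ->]|[x [Hx ->]]].
  - rewrite <- (Ls_nil _ E), (Ls_cooled_sum_left_nil l t Hl E). apply sum_masts_le_Ls.
  - destruct (left_option_cooled_sum l t x Hx) as (l1 & a & l2 & z & El & Hz & ->).
    destruct (IH l1 a l2 z t El (or_introl Hz) Ht) as [_ [HB _]].
    pose proof (Ls_ge_left (sumg l) (sumg (l1 ++ z :: l2))) as Hmove.
    enough (In (sumg (l1 ++ z :: l2)) (leftopts (sumg l))) by (specialize (Hmove H); lra).
    apply in_left_sumg. eauto 7.
Qed.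

Lemma Rs_le_cooled_sum t : 0 <= t -> Rs (sumg l) <= Rs (sumg (cool_list t l)).
Proof.
  intros Ht. destruct (Rs_spec (sumg (cool_list t l))) as [[E ->]|[x [Hx ->]]].
  - rewrite <- (Rs_nil _ E), (Rs_cooled_sum_right_nil l t Hl E). apply Rs_le_sum_masts.
  - destruct (right_option_cooled_sum l t x Hx) as (l1 & a & l2 & z & El & Hz & ->).
    destruct (IH l1 a l2 z t El (or_intror Hz) Ht) as [[_ HA] _].
    pose proof (Rs_le_right (sumg l) (sumg (l1 ++ z :: l2))) as Hmove.
    enough (In (sumg (l1 ++ z :: l2)) (rightopts (sumg l))) by (specialize (Hmove H); lra).
    apply in_right_sumg. eauto 7.
Qed.

Lemma Ls_le_cooled_sum t : 0 <= t -> Ls (sumg l) <= Ls (sumg (cool_list t l)) + t.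
Proof.
  intros Ht. destruct (Ls_spec (sumg l)) as [[E _]|[x [Hx ->]]].
  - rewrite (cool_list_numbers t l (numbers_of_left_sumg_nil l Hl E)). lra.
  - apply in_left_sumg in Hx as (l1 & a & l2 & z & El & Hz & ->).
    destruct (IH l1 a l2 z t El (or_introl Hz) Ht) as [_ [_ HB]].
    rewrite El in Hl |- *. pose proof (Ls_cooled_sum_ge_left_move l1 a l2 z t Hl Ht Hz). lra.
Qed.

Lemma Rs_cooled_sum_le t : 0 <= t -> Rs (sumg (cool_list t l)) - t <= Rs (sumg l).
Proof.
  intros Ht. destruct (Rs_spec (sumg l)) as [[E _]|[x [Hx ->]]].
  - rewrite (cool_list_numbers t l (numbers_of_right_sumg_nil l Hl E)). lra.
  - apply in_right_sumg in Hx as (l1 & a & l2 & z & El & Hz & ->).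
    destruct (IH l1 a l2 z t El (or_intror Hz) Ht) as [[HA _] _].
    rewrite El in Hl |- *. pose proof (Rs_cooled_sum_le_right_move l1 a l2 z t Hl Ht Hz). lra.
Qed.

End CooledSumStep.

Lemma dnz_cooled_sum_bounds l t : Forall dnz l -> 0 <= t -> cooled_sum_bounds l t.
Proof.
  revert t. induction l as [l IH] using component_ind. intros t Hl Ht.
  assert (IH' : forall l1 a l2 z s, l = l1 ++ a :: l2 -> is_option z a -> 0 <= s ->
                  cooled_sum_bounds (l1 ++ z :: l2) s)
    by (intros l1 a l2 z s El Hz Hs; subst l;
        apply (IH l1 a l2 z); auto; apply (dnz_replace l1 a); assumption).
  split; split.
  - apply Ls_cooled_sum_le; assumption.
  - apply Ls_le_cooled_sum; assumption.
  - apply Rs_cooled_sum_le; assumption.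
  - apply Rs_le_cooled_sum; assumption.
Qed.

(** * The mean *)

Lemma cooled_single_bounds G t : dnz G -> temperature G < t ->
  (mast G <= Ls G <= mast G + t) /\ (mast G - t <= Rs G <= mast G).
Proof.
  intros HG Ht. pose proof (temperature_ge0 G HG).
  destruct (dnz_cooled_sum_bounds [G] t (Forall_cons _ HG (Forall_nil _))) as [HL HR]; [lra|].
  unfold cool_list in HL, HR. simpl in HL, HR. rewrite cool_after_temperature in HL, HR by exact Ht.
  rewrite !Ls_gplus_num, !Rs_gplus_num, Ls_num, Rs_num in *. lra.
Qed.

Lemma gtimes_sumg n G : gtimes n G = sumg (repeat G n).
Proof. induction n as [|n IH]; simpl; [reflexivity|]. rewrite IH. reflexivity. Qed.

Lemma Ls_sumg_repeat_num n v : Ls (sumg (repeat (num v) n)) = INR n * v.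
Proof.
  rewrite Ls_nil, leftscore_sumg.
  - induction n as [|n IH]; [unfold sumR; simpl; ring|].
    unfold sumR in *. rewrite S_INR. simpl. rewrite IH. ring.
  - apply left_sumg_nil, Forall_forall. intros a Ha. apply repeat_spec in Ha as ->. reflexivity.
Qed.

Lemma is_lim_seq_div_squeeze (u : nat -> R) v c :
  (forall n, INR n * v <= u n <= INR n * v + c) -> is_lim_seq (fun n => u n / INR n) v.
Proof.
  intros Hu. apply is_lim_seq_incr_1.
  apply is_lim_seq_le_le with (u := fun _ => v) (w := fun n => v + c * / INR (S n)).
  - intros n. destruct (Hu (S n)) as [H1 H2].
    assert (Hn : 0 < INR (S n)) by (apply lt_0_INR; lia).
    unfold Rdiv. split.
    + apply Rmult_le_reg_r with (INR (S n)); [exact Hn|].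
      rewrite Rmult_assoc, Rinv_l by lra. lra.
    + apply Rmult_le_reg_r with (INR (S n)); [exact Hn|].
      rewrite Rmult_assoc, Rmult_plus_distr_r, Rmult_assoc, Rinv_l by lra. lra.
  - apply is_lim_seq_const.
  - replace (Finite v) with (Finite (v + c * 0)) by (f_equal; ring).
    apply is_lim_seq_plus'; [apply is_lim_seq_const|].
    assert (Hinv : is_lim_seq (fun n => / INR (S n)) 0).
    { apply (is_lim_seq_incr_1 (fun n => / INR n)).
      apply (is_lim_seq_inv INR p_infty is_lim_seq_INR). discriminate. }
    exact (is_lim_seq_scal_l _ c _ Hinv).
Qed.

Lemma mean_eq_mast G : dnz G -> mean G = mast G.
Proof.
  intros HG. set (t := temperature G + 1).
  assert (Ht : 0 <= t) by (pose proof (temperature_ge0 G HG); unfold t; lra).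
  assert (Hcool : forall n, cool_list t (repeat G n) = repeat (num (mast G)) n).
  { intros n. induction n as [|n IH]; [reflexivity|]. unfold cool_list in *. simpl.
    rewrite IH, cool_after_temperature by (unfold t; lra). reflexivity. }
  unfold mean. replace (Lim_seq _) with (Finite (mast G)); [reflexivity|].
  symmetry. apply is_lim_seq_unique, (is_lim_seq_div_squeeze _ _ t). intros n.
  destruct (dnz_cooled_sum_bounds (repeat G n) t) as [HL _]; [|exact Ht|].
  - apply Forall_forall. intros a Ha. apply repeat_spec in Ha as ->. exact HG.
  - rewrite Hcool, Ls_sumg_repeat_num, <- gtimes_sumg in HL. lra.
Qed.

Theorem mainTheorem5 (G : game) :
  dicotic G -> nonzugzwang G -> terminals_are_numbers G ->
  mean G - temperature G <= Rs G /\ Rs G <= mean G /\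
  mean G <= Ls G /\ Ls G <= mean G + temperature G.
Proof.
  intros Hd Hn Ht. pose proof (dnz_of_hyps G Hd Hn Ht) as HG.
  rewrite (mean_eq_mast G HG).
  assert (Hbounds : forall eps, 0 < eps ->
    (mast G <= Ls G <= mast G + (temperature G + eps)) /\
    (mast G - (temperature G + eps) <= Rs G <= mast G))
    by (intros eps Heps; apply cooled_single_bounds; [exact HG|lra]).
  destruct (Hbounds 1 Rlt_0_1) as [[HL _] [_ HR]].
  split; [|split; [exact HR|split; [exact HL|]]].
  - apply Rle_plus_epsilon. intros eps Heps. destruct (Hbounds eps Heps) as [_ [? _]]. lra.
  - apply Rle_plus_epsilon. intros eps Heps. destruct (Hbounds eps Heps) as [[_ ?] _]. lra.
Qed.
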